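(* Let $n\ge 1$, $1\le k\le n$, and let $\omega_k$ be the $k$-th fundamental weight of $\mathfrak{sp}_{2n}(\mathbb C)$. Then the symplectic FFLV basis $\{f^{\mathsf p}\nu_{\omega_k} : \mathsf p\in S(\omega_k)\}$ of $V_{\omega_k}$ is in a weight preserving one-to-one correspondence with the set of single column symplectic PBW tableaux of length $k$.
   Context: Notation for $\mathfrak{sp}_{2n}$: $\varepsilon_1,\dots,\varepsilon_n$ is the standard basis of $\mathfrak h^*$, simple roots $\alpha_i=\varepsilon_i-\varepsilon_{i+1}$ ($i<n$), $\alpha_n=2\varepsilon_n$, fundamental weights $\omega_k=\varepsilon_1+\dots+\varepsilon_k$. For $1\le j\le n$ put $\bar j:=2n+1-j$. Let $\mathsf J=\{1<2<\dots<n<\overline{n-1}<\dots<\bar 1\}$; for $x\in\mathsf J$, $x+1$ denotes the successor of $x$ in $\mathsf J$. The positive roots are $\alpha_{i,j}=\alpha_i+\dots+\alpha_j=\varepsilon_i-\varepsilon_{j+1}$ for $1\le i\le j<n$, $\alpha_{i,n}=\alpha_i+\dots+\alpha_n=\varepsilon_i+\varepsilon_n$, and $\alpha_{i,\bar j}=\alpha_i+\dots+\alpha_n+\alpha_{n-1}+\dots+\alpha_j=\varepsilon_i+\varepsilon_j$ for $1\le i\le j\le n$ (with $\alpha_{i,\bar n}=\alpha_{i,n}$); write $\alpha_{\bar j}=\alpha_{j,\bar j}$. For each positive root $\alpha$ fix a nonzero root vector $f_\alpha\in\mathfrak n^-_{-\alpha}$, and write $f_{p,q}=f_{\alpha_{p,q}}$.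 A symplectic Dyck path is a sequence $\mathsf d=(\mathsf d(0),\dots,\mathsf d(s))$, $s\ge 0$, of positive roots such that $\mathsf d(0)=\alpha_i$ is simple, $\mathsf d(s)=\alpha_j$ or $\mathsf d(s)=\alpha_{\bar j}$ for some $j$, and if $\mathsf d(r)=\alpha_{p,q}$ ($p,q\in\mathsf J$) then $\mathsf d(r+1)\in\{\alpha_{p,q+1},\alpha_{p+1,q}\}$. For a dominant integral weight $\lambda=\sum_k m_k\omega_k$, the FFLV polytope $P(\lambda)\subset\mathbb R_{\ge0}^{n^2}$ consists of the points $(\mathsf p_\alpha)_{\alpha>0}$ with $\mathsf p_\alpha\ge 0$ such that for every Dyck path $\mathsf d$ with $\mathsf d(0)=\alpha_i$: $\sum_r \mathsf p_{\mathsf d(r)}\le m_i+\dots+m_j$ if $\mathsf d(s)=\alpha_j$, and $\sum_r \mathsf p_{\mathsf d(r)}\le m_i+\dots+m_n$ if $\mathsf d(s)=\alpha_{\bar j}$. $S(\lambda)$ is the set of integral points of $P(\lambda)$, and $f^{\mathsf p}=\prod_\alpha f_\alpha^{\mathsf p_\alpha}$ (product in a fixed order of root vectors). It is known (Feigin–Fourier–Littelmann) that $\{f^{\mathsf p}\nu_\lambda:\mathsf p\in S(\lambda)\}$ is a basis of the irreducible module $V_\lambda$ with highest weight vector $\nu_\lambda$ (the symplectic FFLV basis); the weight of $f^{\mathsf p}\nu_\lambda$ is $\lambda-\sum_\alpha \mathsf p_\alpha\alpha$. Let $\mathcal N=\{1<\dots<n<\bar n<\dots<\bar 1\}$. A single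 column symplectic PBW tableau of length $k$ is a column of $k$ boxes filled with entries $T_1,\dots,T_k\in\mathcal N$ (top to bottom) such that: (i) if $T_i\le k$ then $T_i=i$; (ii) if $i_1<i_2$ and $T_{i_1}\ne i_1$ then $T_{i_1}>T_{i_2}$; (iii) if $T_i=i$ and $T_{i'}=\bar i$ for some $i'$, then $i'<i$, whenever $i<k$. Its weight is $\sum_{i\in\{1,\dots,n\},\, i\text{ appears}}\varepsilon_i-\sum_{j\in\{1,\dots,n\},\,\bar j\text{ appears}}\varepsilon_j$. *)

From mathcomp Require Import all_boot all_order all_algebra.
Unset Printing Implicit Defensive.
Import GRing.Theory Num.Theory.

(* Encoding conventions:
   - The totally ordered set J = {1<..<n<bar(n-1)<..<bar 1} is encoded by
     positions 1..2n-1 (x <= n is x, n+m is bar(n-m)); the successor in J is +1.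
   - The positive root alpha_{p,q} (p,q in J) is encoded by the pair (p,q);
     positive roots are exactly the pairs with 1 <= p <= n, p <= q <= 2n-p.
     (q < n : eps_p - eps_{q+1};  q >= n : eps_p + eps_{2n-q}.)
   - N = {1<..<n<bar n<..<bar 1} is encoded by 1..2n with bar j = 2n+1-j. *)

Definition rootidx (n : nat) := ('I_n.+1 * 'I_(n.*2))%type.

Definition rv (n : nat) (x : rootidx n) : nat * nat := (val x.1, val x.2).

Definition is_posroot (n : nat) (x : nat * nat) : bool :=
  [&& 0 < x.1, x.1 <= n, x.1 <= x.2 & x.2 <= n.*2 - x.1].

Definition rootcoord (n : nat) (x : nat * nat) (l : nat) : int :=
  if x.2 < n then (((l == x.1) : nat)%:Z - ((l == x.2.+1) : nat)%:Z)%R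
  else (((l == x.1) : nat)%:Z + ((l == (n.*2 - x.2)%N) : nat)%:Z)%R.

Definition dyck_step (a b : nat * nat) : bool :=
  (b == (a.1, a.2.+1)) || (b == (a.1.+1, a.2)).

Definition is_dyck (n : nat) (d : seq (nat * nat)) : bool :=
  let s := head (0, 0) d in
  let e := last (0, 0) d in
  [&& d != [::], all (is_posroot n) d, s.1 == s.2,
      path dyck_step s (behead d) & (e.1 == e.2) || (e.1 + e.2 == n.*2)].

(* right-hand side of the Dyck path inequality for lambda = sum_l m l * omega_l *)
Definition dyck_bound (n : nat) (m : nat -> nat) (d : seq (nat * nat)) : nat :=
  let i := (head (0, 0) d).1 in
  let e := last (0, 0) d in
  if (e.1 == e.2) && (e.1 < n) then \sum_(i <= l < e.1.+1) m l
  else \sum_(i <= l < n.+1) m l.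

(* p is an integral point of the FFLV polytope P(lambda), i.e. p \in S(lambda)
   (entries at non-root indices are required to be 0) *)
Definition in_S (n : nat) (m : nat -> nat) (p : {ffun rootidx n -> nat}) : Prop :=
  (forall x : rootidx n, ~~ is_posroot n (rv n x) -> p x = 0%N) /\
  (forall d : seq (rootidx n), is_dyck n (map (rv n) d) ->
     \sum_(x <- d) p x <= dyck_bound n m (map (rv n) d)).

Definition omega (k : nat) : nat -> nat := fun l => (l == k) : nat.

(* eps_l coordinate of the weight lambda - sum_alpha p_alpha alpha of f^p nu_lambda *)
Definition fflv_wt (n : nat) (m : nat -> nat) (p : {ffun rootidx n -> nat})
  (l : nat) : int :=
  (((\sum_(l <= t < n.+1) m t)%N)%:Z
  - \sum_(x : rootidx n) (p x)%:Z * rootcoord n (rv n x) l)%R.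

Definition tab_entry (T : seq nat) (i : nat) : nat := nth 0%N T i.-1.

Definition is_sptab (n k : nat) (T : seq nat) : Prop :=
  [/\ size T = k,
      all (fun a => 0 < a <= n.*2) T,
      (forall i, 1 <= i <= k -> tab_entry T i <= k -> tab_entry T i = i),
      (forall i1 i2, 1 <= i1 -> i1 < i2 -> i2 <= k ->
         tab_entry T i1 <> i1 -> tab_entry T i2 < tab_entry T i1) &
      (forall i i', 1 <= i -> i < k -> 1 <= i' <= k ->
         tab_entry T i = i -> tab_entry T i' = n.*2.+1 - i -> i' < i)].

Definition tab_wt (n : nat) (T : seq nat) (l : nat) : int :=
  (((l \in T) : nat)%:Z - (((n.*2.+1 - l)%N \in T) : nat)%:Z)%R.

From mathcomp Require Import all_boot all_order all_algebra.
From mathcomp Require Import zify.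
Import GRing.Theory.

(* For lambda = omega_k every Dyck path bound is 0 or 1, and it is 1 exactly
   when the path can pass through a root alpha_{i,j} with i <= k <= j.  Testing
   the hook paths (along row a of the root triangle, then down column c) shows
   that S(omega_k) consists of the 0/1 points supported on such roots whose
   support is an antichain for the componentwise order; conversely, a Dyck path
   is a chain, so it meets such an antichain at most once.  An antichain has at
   most one root alpha_{i,q} in each row i <= k; writing q+1 in row i (the letter
   of N with alpha_{i,q} = eps_i - eps_{q+1}, resp. eps_i + eps_{bar(q+1)}), and
   i in an empty row, gives the tableau, and the weights agree row by row. *)

Lemma sum_nat_of_bool (T : Type) (r : seq T) (a : pred T) :
  \sum_(x <- r) a x = count a r.
Proof. by rewrite -sum1_count [RHS]big_mkcond. Qed.

Lemma natz_mem_uniq (T : eqType) (s : seq T) x : uniq s ->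
  (((x \in s) : nat)%:Z = \sum_(y <- s) ((y == x) : nat)%:Z)%R.
Proof.
move=> s_uniq; rewrite -count_uniq_mem // -sum_nat_of_bool.
exact: (big_morph Posz PoszD (erefl (0 : int))).
Qed.

Lemma leq_sum_mem {T : eqType} {r : seq T} {F : T -> nat} {x} :
  x \in r -> F x <= \sum_(y <- r) F y.
Proof. by move=> xr; rewrite (big_rem x xr) leq_addr. Qed.

Lemma leq_sum_mem2 {T : eqType} {r : seq T} {F : T -> nat} {x y} :
  x != y -> x \in r -> y \in r -> F x + F y <= \sum_(z <- r) F z.
Proof.
move=> neq_xy xr yr; rewrite (big_rem x xr) leq_add2l.
by apply: leq_sum_mem; rewrite rem_mem // eq_sym.
Qed.

Lemma sum_omega k a b : \sum_(a <= l < b) omega k l = (a <= k < b).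
Proof.
by rewrite sum_nat_of_bool count_uniq_mem ?iota_uniq // mem_index_iota.
Qed.

Lemma path_homo_bounds {T : eqType} {e : rel T} {f : T -> nat} {x s y} :
  (forall a b, e a b -> f a <= f b) ->
  path e x s -> y \in x :: s -> f x <= f y <= f (last x s).
Proof.
move=> f_homo; elim: s x y => [|z s IHs] x y /=.
  by rewrite inE => _ /eqP ->; rewrite leqnn.
case/andP=> /f_homo le_xz pzs; rewrite inE => /orP[/eqP ->|yzs].
  by rewrite leqnn; have /andP[_ /(leq_trans le_xz)] := IHs z z pzs (mem_head _ _).
by have /andP[/(leq_trans le_xz) -> ->] := IHs z y pzs yzs.
Qed.

Lemma sum_path_le1 {T : eqType} {lt : rel T} {F : T -> nat} {x s} :
  transitive lt -> (forall y, F y <= 1) ->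
  (forall y z, lt y z -> F y + F z <= 1) ->
  path lt x s -> \sum_(y <- x :: s) F y <= 1.
Proof.
move=> lt_trans F_le1 F_chain; elim: s x => [|z s IHs] x xs.
  by rewrite big_seq1.
have /allP x_lt := order_path_min lt_trans xs.
rewrite big_cons; case: (posnP (F x)) => [->|F_x]; first exact: IHs (path_sorted xs).
rewrite big1_seq ?addn0 // => y /andP[_ /x_lt /F_chain]; lia.
Qed.

Section PointCoefficients.
Variable n : nat.
Implicit Types (p : {ffun rootidx n -> nat}) (a : nat * nat).

Definition pcoef p a : nat := \sum_(x | rv n x == a) p x.

Lemma rv_inj : injective (rv n).
Proof. by move=> [a b] [c d] [/val_inj -> /val_inj ->]. Qed.

Lemma pcoef_rv p x : pcoef p (rv n x) = p x.
Proof. by rewrite /pcoef (big_pred1 x) // => y; rewrite inj_eq //; apply: rv_inj. Qed.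

Lemma pcoef_inj p1 p2 : pcoef p1 =1 pcoef p2 -> p1 = p2.
Proof. by move=> eq_p; apply/ffunP => x; rewrite -!pcoef_rv eq_p. Qed.

Lemma pcoef_ffun (G : nat * nat -> nat) :
  (forall a, G a != 0 -> is_posroot n a) -> pcoef [ffun x => G (rv n x)] =1 G.
Proof.
move=> G_root [a b]; case: (boolP ((a <= n) && (b < n.*2))) => [/andP[a_le b_lt]|out].
  by rewrite -[(a, b)]/(rv n (Ordinal (a_le : a < n.+1), Ordinal b_lt)) pcoef_rv ffunE.
have G0 : G (a, b) = 0.
  by apply/eqP; apply: contraNT out => /G_root /and4P[/= a_gt0 a_le _ b_le]; lia.
by rewrite G0 /pcoef big1 // => x /eqP rvx; rewrite ffunE rvx.
Qed.

Lemma posroots_rv (d : seq (nat * nat)) :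
  all (is_posroot n) d -> exists d' : seq (rootidx n), map (rv n) d' = d.
Proof.
elim: d => [|[a b] d IHd] /=; first by exists [::].
case/andP=> /and4P[/= a_gt0 a_le_n a_le_b b_le] /IHd[d' <-].
have a_lt : a < n.+1 by lia.
have b_lt : b < n.*2 by lia.
by exists ((Ordinal a_lt, Ordinal b_lt) :: d').
Qed.

Lemma in_SE m p : in_S n m p <->
  (forall a, ~~ is_posroot n a -> pcoef p a = 0) /\
  (forall d, is_dyck n d -> \sum_(a <- d) pcoef p a <= dyck_bound n m d).
Proof.
have sum_rv d' : \sum_(a <- map (rv n) d') pcoef p a = \sum_(x <- d') p x.
  by rewrite big_map; apply: eq_bigr => x _; rewrite pcoef_rv.
split=> [[p_root p_dyck]|[p_root p_dyck]]; split.
- by move=> a na; rewrite /pcoef big1 // => x /eqP rva; apply: p_root; rewrite rva.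
- move=> d dyck_d; have [d' rvd'] : exists d', map (rv n) d' = d.
    by apply: posroots_rv; case/and5P: dyck_d.
  by rewrite -rvd' sum_rv; apply: p_dyck; rewrite rvd'.
- by move=> x /p_root; rewrite pcoef_rv.
- by move=> d' /p_dyck; rewrite sum_rv.
Qed.

End PointCoefficients.

Section HookPaths.
Variable n : nat.

Definition hook_next (c : nat) (x : nat * nat) : nat * nat :=
  if x.2 < c then (x.1, x.2.+1) else (x.1.+1, x.2).

Definition hook (a c : nat) : seq (nat * nat) :=
  traject (hook_next c) (a, a) ((c - a) + (minn c (n.*2 - c) - a)).+1.

Lemma iter_hook_next a c t : a <= c ->
  iter t (hook_next c) (a, a) =
  if t <= c - a then (a, a + t) else (a + (t - (c - a)), c).
Proof.
move=> le_ac; elim: t => [|t IHt]; first by rewrite addn0.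
rewrite iterS IHt /hook_next; case: (leqP t (c - a)) => t_le /=;
  case: ifP => lt_c; case: ifP => t1_le; congr pair; lia.
Qed.

Lemma hook_head a c : head (0, 0) (hook a c) = (a, a).
Proof. by []. Qed.

Lemma hook_last a c : a <= c <= n.*2 - a -> last (0, 0) (hook a c) = (minn c (n.*2 - c), c).
Proof.
move=> c_range; rewrite /hook trajectS /= last_traject iter_hook_next; last by lia.
case: ifP => t_le; congr pair; lia.
Qed.

Lemma mem_hook a c x : a <= c ->
  x \in hook a c = [|| (x.1 == a) && (a <= x.2 <= c) |
                      (x.2 == c) && (a <= x.1 <= minn c (n.*2 - c))].
Proof.
move=> le_ac; case: x => i j /=; apply/trajectP/idP => [[t t_lt]|].
  by rewrite iter_hook_next //; case: ifP => t_le [-> ->]; apply/orP; lia.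
case/orP=> /and3P[/eqP -> le1 le2].
  exists (j - a); first lia.
  by rewrite iter_hook_next //; case: ifP => t_le; congr pair; lia.
exists ((c - a) + (i - a)); first lia.
by rewrite iter_hook_next //; case: ifP => t_le; congr pair; lia.
Qed.

Lemma hook_dyck a c : 0 < a <= n -> a <= c <= n.*2 - a -> is_dyck n (hook a c).
Proof.
move=> a_range c_range; have le_ac : a <= c by lia.
rewrite /is_dyck hook_head hook_last //; apply/and5P; split => //.
- apply/allP=> -[i j]; rewrite mem_hook //= => mem_ij.
  by rewrite /is_posroot /=; apply/and4P; split; lia.
- apply: sub_path (fpath_traject _ _ _) => x _ /eqP <-.
  by rewrite /dyck_step /hook_next; case: ifP; rewrite eqxx ?orbT.
- by apply/orP => /=; lia.
Qed.

Lemma dyck_bound_hook k a c : k <= n -> 0 < a -> a <= c <= n.*2 - a ->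
  dyck_bound n (omega k) (hook a c) = (a <= k <= c).
Proof.
move=> le_kn a_gt0 c_range; rewrite /dyck_bound hook_head hook_last //.
by rewrite /=; case: ifP => t_le; rewrite sum_omega; lia.
Qed.

End HookPaths.

(* Strict componentwise order; the sum condition only encodes [a != b]. *)
Definition pair_lt (a b : nat * nat) : bool :=
  [&& a.1 <= b.1, a.2 <= b.2 & a.1 + a.2 < b.1 + b.2].

Lemma pair_lt_trans : transitive pair_lt.
Proof. by move=> b a c /and3P[ab1 ab2 ab] /and3P[bc1 bc2 bc]; apply/and3P; split; lia. Qed.

Lemma dyck_step_pair_lt a b : dyck_step a b -> pair_lt a b.
Proof. by case/orP=> /eqP ->; apply/and3P; split => /=; lia. Qed.

Section FundamentalWeight.
Variables n k : nat.
Hypothesis le_kn : k <= n.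
Implicit Types (F : nat * nat -> nat) (T : seq nat).

Definition antichain_point F : Prop :=
  [/\ forall a, F a != 0 -> is_posroot n a && (a.1 <= k <= a.2),
      forall a, F a <= 1 &
      forall a b, a != b -> a.1 <= b.1 -> a.2 <= b.2 -> F a + F b <= 1].

Lemma eq_antichain_point F G : F =1 G -> antichain_point F -> antichain_point G.
Proof.
move=> eqFG [F_supp F_le1 F_anti].
by split=> [a|a|a b]; rewrite -!eqFG; [apply: F_supp|apply: F_le1|apply: F_anti].
Qed.

Lemma antichain_point_nonroot F a : antichain_point F -> ~~ is_posroot n a -> F a = 0.
Proof. by case=> F_supp _ _ na; apply/eqP; apply: contraNT na => /F_supp /andP[]. Qed.

Lemma antichain_point_out F i q : antichain_point F -> ~~ (0 < i <= k) -> F (i, q) = 0.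
Proof.
case=> F_supp _ _ i_out; apply/eqP; apply: contraNT i_out.
by case/F_supp/andP=> /and4P[/= i_gt0 _ _ _] /andP[/= i_le _]; lia.
Qed.

Lemma dyck_sum_le_bound F d : antichain_point F -> is_dyck n d ->
  \sum_(a <- d) F a <= dyck_bound n (omega k) d.
Proof.
case=> F_supp F_le1 F_anti; case: d => [|h t] //.
case/and5P=> _ _ _ /= path_ht _; rewrite /dyck_bound /=.
have [/hasP[[u v] uvd /F_supp /andP[_ /andP[/= u_le v_ge]]]|F0] :=
  boolP (has (fun y => F y != 0) (h :: t)); last first.
  rewrite big1_seq // => y /andP[_ yd]; apply/eqP.
  by apply: contraNT F0 => Fy; apply/hasP; exists y.
have step1 a b : dyck_step a b -> a.1 <= b.1 by case/dyck_step_pair_lt/and3P.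
have step2 a b : dyck_step a b -> a.2 <= b.2 by case/dyck_step_pair_lt/and3P.
have /andP[h_u _] : h.1 <= u <= (last h t).1 := path_homo_bounds step1 path_ht uvd.
have /andP[_ v_e] : h.2 <= v <= (last h t).2 := path_homo_bounds step2 path_ht uvd.
apply: leq_trans (_ : 1 <= _); last by case: ifP => e_diag; rewrite sum_omega; lia.
apply: sum_path_le1 pair_lt_trans F_le1 _ (sub_path dyck_step_pair_lt path_ht).
move=> a b /and3P[le1 le2 lt_sum]; apply: F_anti => //.
by apply: contraTneq lt_sum => ->; rewrite ltnn.
Qed.

Lemma antichain_point_of_dyck F :
  (forall a, ~~ is_posroot n a -> F a = 0) ->
  (forall d, is_dyck n d -> \sum_(a <- d) F a <= dyck_bound n (omega k) d) ->
  antichain_point F.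
Proof.
move=> F_root F_dyck.
have hook_le a c : 0 < a <= n -> a <= c <= n.*2 - a ->
    \sum_(x <- hook n a c) F x <= (a <= k <= c).
  move=> a_range c_range; rewrite -(dyck_bound_hook n k); try lia.
  exact/F_dyck/hook_dyck.
have root_le a : is_posroot n a -> F a <= (a.1 <= k <= a.2).
  case: a => a b /and4P[/= a_gt0 a_le a_le_b b_le].
  apply: leq_trans (hook_le a b _ _); try lia.
  by apply: leq_sum_mem; rewrite mem_hook //= eqxx a_le_b leqnn.
have F_le1 a : F a <= 1.
  by case: (boolP (is_posroot n a)) => [/root_le/leq_trans->|/F_root->] //; apply: leq_b1.
split=> // [a Fa|[a1 a2] [b1 b2] neq_ab /= le1 le2].
  have root_a : is_posroot n a by apply: contraNT Fa => /F_root ->.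
  by have := root_le a root_a; rewrite root_a /=; lia.
have [root_a|/F_root->] := boolP (is_posroot n (a1, a2)); last exact: F_le1.
have [root_b|/F_root->] := boolP (is_posroot n (b1, b2)); last by rewrite addn0.
move: root_a root_b => /and4P[/= a1_gt0 a1_le a1_le_a2 a2_le]
  /and4P[/= b1_gt0 b1_le b1_le_b2 b2_le].
have mem_a : (a1, a2) \in hook n a1 b2 by rewrite mem_hook /=; lia.
have mem_b : (b1, b2) \in hook n a1 b2 by rewrite mem_hook /=; lia.
apply: leq_trans (leq_sum_mem2 neq_ab mem_a mem_b) _.
by apply: leq_trans (hook_le a1 b2 _ _) _; lia.
Qed.

Lemma in_S_antichain_point (p : {ffun rootidx n -> nat}) :
  in_S n (omega k) p <-> antichain_point (pcoef n p).
Proof.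
rewrite in_SE; split=> [[p_root p_dyck]|p_anti].
  exact: antichain_point_of_dyck.
split=> [a|d]; first exact: antichain_point_nonroot.
exact: dyck_sum_le_bound.
Qed.

Definition row_entry F i : nat :=
  if [pick q : 'I_n.*2 | F (i, val q) != 0] is Some q then q.+1 else i.

Variant row_entry_spec F i : nat -> Prop :=
  | RowEmpty of (forall q, F (i, q) = 0) : row_entry_spec F i i
  | RowHit q of F (i, q) = 1 & (forall q', q' != q -> F (i, q') = 0)
      & k <= q <= n.*2 - i : row_entry_spec F i q.+1.

Lemma antichain_rowP {F} i : antichain_point F -> row_entry_spec F i (row_entry F i).
Proof.
case=> F_supp F_le1 F_anti; rewrite /row_entry.
case: pickP => [[q q_lt] /= Fq|F0]; last first.
  apply: RowEmpty => q; apply/eqP; apply: contraT => Fq.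
  have /andP[/and4P[/= i_gt0 _ i_le q_le] _] := F_supp _ Fq.
  have q_lt : q < n.*2 by lia.
  by have := F0 (Ordinal q_lt); rewrite /= Fq.
have /andP[/and4P[/= i_gt0 _ i_le q_le] /andP[/= _ k_le]] := F_supp _ Fq.
have row_anti q' : q' != q -> F (i, q') + F (i, q) <= 1.
  move=> neq_q; case: (leqP q' q) => [le_q|/ltnW le_q].
    by apply: F_anti; rewrite //= xpair_eqE eqxx.
  by rewrite addnC; apply: F_anti; rewrite //= xpair_eqE eqxx eq_sym.
have Fq1 : F (i, q) = 1 by have := F_le1 (i, q); lia.
apply: RowHit => // [q' /row_anti|]; lia.
Qed.

Definition tab_of F : seq nat := [seq row_entry F i | i <- iota 1 k].

Lemma tab_entry_tab_of F i : 0 < i <= k -> tab_entry (tab_of F) i = row_entry F i.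
Proof.
move=> i_range; rewrite /tab_entry (nth_map 0) ?size_iota ?nth_iota; try lia.
by rewrite add1n prednK //; lia.
Qed.

Lemma tab_of_sptab F : antichain_point F -> is_sptab n k (tab_of F).
Proof.
move=> F_anti; have [_ _ F_pair] := F_anti.
split=> [|||i1 i2 i1_gt0 lt_i12 i2_le|i i' i_gt0 lt_ik i'_range].
- by rewrite size_map size_iota.
- apply/allP=> x /mapP[i]; rewrite mem_iota => i_range ->.
  by case: (antichain_rowP i F_anti) => [_|q _ _]; lia.
- move=> i i_range; rewrite tab_entry_tab_of //.
  by case: (antichain_rowP i F_anti) => [//|q _ _]; lia.
- rewrite !tab_entry_tab_of; try lia.
  case: (antichain_rowP i1 F_anti) => // q Fq1 _ q_range _.
  case: (antichain_rowP i2 F_anti) => [_|q' Fq1' _ q'_range]; first lia.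
  rewrite ltnS leqNgt; apply/negP => le_qq'.
  have neq : (i1, q) != (i2, q') by rewrite xpair_eqE negb_and ltn_eqF.
  by have := F_pair _ _ neq (ltnW lt_i12) le_qq'; rewrite Fq1 Fq1'.
- rewrite !tab_entry_tab_of; try lia.
  have [->|neq_i'] := eqVneq i' i; first lia.
  case: (antichain_rowP i F_anti) => [_|q _ _ q_range]; last lia.
  by case: (antichain_rowP i' F_anti) => [_|q' _ _ q'_range]; lia.
Qed.

Definition tab_point T (a : nat * nat) : nat :=
  [&& 0 < a.1 <= k, tab_entry T a.1 != a.1 & tab_entry T a.1 == a.2.+1].

Lemma sptab_entry_range {T i} : is_sptab n k T -> 0 < i <= k -> 0 < tab_entry T i <= n.*2.
Proof.
case=> size_T /allP T_range _ _ _ i_range; apply: T_range.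
by rewrite /tab_entry mem_nth // size_T; lia.
Qed.

(* By (iii) the entry bar j cannot sit below a fixed entry j, and by (ii) a
   non-fixed entry bar j below row j forces row j to hold a still larger bar. *)
Lemma sptab_entry_le_bar {T i} : is_sptab n k T -> 0 < i <= k ->
  tab_entry T i != i -> tab_entry T i <= n.*2.+1 - i.
Proof.
move=> T_tab; have [_ _ _ T_dec T_bar] := T_tab.
suff no_bar j i0 : 0 < i0 <= k -> tab_entry T i0 != i0 -> j < i0 ->
    tab_entry T i0 = n.*2.+1 - j -> False.
  move=> i_range T_i; rewrite leqNgt; apply/negP => lt_bar.
  have := sptab_entry_range T_tab i_range.
  by move=> T_i_range; apply: (no_bar (n.*2.+1 - tab_entry T i) i) => //; lia.
elim/ltn_ind: j i0 => j IHj i0 i0_range T_i0 lt_ji0 T_i0E.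
have := sptab_entry_range T_tab i0_range => T_i0_range.
have j_range : 0 < j <= k by lia.
have [T_j|T_j] := eqVneq (tab_entry T j) j.
  by have := T_bar j i0 _ _ i0_range T_j T_i0E; lia.
have lt_T : tab_entry T i0 < tab_entry T j.
  by apply: T_dec => //; [lia | lia | apply/eqP].
have := sptab_entry_range T_tab j_range => T_j_range.
by apply: (IHj (n.*2.+1 - tab_entry T j) _ j j_range T_j); lia.
Qed.

Lemma tab_point_neq0 T i q : tab_point T (i, q) != 0 ->
  [/\ 0 < i <= k, tab_entry T i != i & tab_entry T i = q.+1].
Proof. by rewrite /tab_point /=; case: and3P => // -[i_range T_i /eqP]. Qed.

Lemma tab_point_antichain {T} : is_sptab n k T -> antichain_point (tab_point T).
Proof.
move=> T_tab; have [_ _ T_fix T_dec _] := T_tab.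
split=> [[i q] /tab_point_neq0[i_range T_i T_iE]|a|[i q] [i' q'] neq /= le_i le_q].
- have := sptab_entry_le_bar T_tab i_range T_i.
  have := sptab_entry_range T_tab i_range.
  have T_gt : k < tab_entry T i.
    by rewrite ltnNge; apply: contra T_i => le_k; rewrite T_fix.
  by move=> T_i_range T_i_le; apply/andP; split; [apply/and4P|apply/andP]; split=> /=; lia.
- exact: leq_b1.
have [-> | /tab_point_neq0[i_range T_i T_iE]] := eqVneq (tab_point T (i, q)) 0.
  exact: leq_b1.
have [-> | /tab_point_neq0[i'_range _ T_i'E]] := eqVneq (tab_point T (i', q')) 0.
  by rewrite addn0 leq_b1.
have [eq_i|neq_i] := eqVneq i i'.
  by move: neq T_iE T_i'E; rewrite eq_i xpair_eqE eqxx /= => neq_q ->; lia.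
by have := T_dec i i' _ _ _ (elimN eqP T_i); lia.
Qed.

Lemma tab_of_point T : is_sptab n k T -> tab_of (tab_point T) = T.
Proof.
move=> T_tab; have [size_T _ _ _ _] := T_tab.
apply: (@eq_from_nth _ 0); first by rewrite size_map size_iota.
move=> j; rewrite size_map size_iota => j_lt; have j_range : 0 < j.+1 <= k by lia.
rewrite -[nth 0 T j]/(tab_entry T j.+1) -[nth 0 _ j]/(tab_entry _ j.+1) tab_entry_tab_of //.
case: (antichain_rowP j.+1 (tab_point_antichain T_tab)) => [TP0|q TP1 _ _].
  apply/esym/eqP; apply: contraT => T_j; have := TP0 (tab_entry T j.+1).-1.
  have := sptab_entry_range T_tab j_range => T_range.
  by rewrite /tab_point /= j_lt T_j prednK ?eqxx //; lia.
have : tab_point T (j.+1, q) != 0 by rewrite TP1.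
by case/tab_point_neq0 => _ _ ->.
Qed.

Lemma point_of_tab_of {F} : antichain_point F -> tab_point (tab_of F) =1 F.
Proof.
move=> F_anti [i q]; rewrite /tab_point /=.
have [i_range|i_out] := boolP (0 < i <= k); last by rewrite antichain_point_out.
rewrite tab_entry_tab_of //=.
case: (antichain_rowP i F_anti) => [F0|q' Fq' F0 q'_range]; first by rewrite eqxx F0.
rewrite eqSS; have [->|neq] := eqVneq q q'; first by rewrite Fq'; case: eqP => //; lia.
by rewrite F0 //; case: eqP => //; lia.
Qed.

Lemma tab_of_uniq F : antichain_point F -> uniq (tab_of F).
Proof.
move=> F_anti; have [_ _ F_pair] := F_anti.
rewrite map_inj_in_uniq ?iota_uniq // => i j; rewrite !mem_iota => i_range j_range.
case: (antichain_rowP i F_anti) => [_|q Fq _ q_range];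
  case: (antichain_rowP j F_anti) => [_|q' Fq' _ q'_range] //; try lia.
case=> eq_q; rewrite -{}eq_q in Fq'; apply/eqP; apply: contraT => neq_ij.
have [lt_ij|lt_ji] : i < j \/ j < i by lia.
  have := F_pair (i, q) (j, q) _ (ltnW lt_ij) (leqnn q); rewrite Fq Fq'.
  by apply; rewrite xpair_eqE negb_and neq_ij.
have := F_pair (j, q) (i, q) _ (ltnW lt_ji) (leqnn q); rewrite Fq Fq'.
by apply; rewrite xpair_eqE negb_and eq_sym neq_ij.
Qed.

Local Open Scope ring_scope.

Definition row_wt F (l i : nat) : int :=
  \sum_(q < n.*2) (F (i, val q))%:Z * rootcoord n (i, val q) l.

Lemma row_wt_out F l i : antichain_point F -> ~~ (0 < i <= k)%N -> row_wt F l i = 0.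
Proof.
by move=> F_anti i_out; rewrite /row_wt big1 // => q _; rewrite antichain_point_out ?mul0r.
Qed.

Lemma row_entry_wt F i l : antichain_point F -> (0 < i <= k)%N -> (0 < l <= n)%N ->
  ((i == l) : nat)%:Z - row_wt F l i =
  ((row_entry F i == l) : nat)%:Z - ((row_entry F i == n.*2.+1 - l)%N : nat)%:Z.
Proof.
move=> F_anti i_range l_range; rewrite /row_wt.
case: (antichain_rowP i F_anti) => [F0|q Fq F0 q_range].
  by rewrite big1 => [|q _]; rewrite ?F0 ?mul0r; lia.
have q_lt : (q < n.*2)%N by lia.
rewrite (bigD1 (Ordinal q_lt)) //= big1 => [|q' neq_q']; last first.
  by rewrite F0 ?mul0r //; apply: contra neq_q' => /eqP eq_q; apply/eqP/val_inj.
by rewrite Fq mul1r addr0 /rootcoord /=; case: ifP => q_n; lia.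
Qed.

Lemma tab_of_wt (p : {ffun rootidx n -> nat}) l :
  antichain_point (pcoef n p) -> (0 < l <= n)%N ->
  tab_wt n (tab_of (pcoef n p)) l = fflv_wt n (omega k) p l.
Proof.
move=> p_anti l_range; set F := pcoef n p.
have omega_rows : ((\sum_(l <= t < n.+1) omega k t)%N)%:Z =
    \sum_(i <- iota 1 k) ((i == l) : nat)%:Z.
  by rewrite sum_omega -natz_mem_uniq ?iota_uniq // mem_iota; congr Posz; lia.
have root_rows : \sum_(x : rootidx n) (p x)%:Z * rootcoord n (rv n x) l =
    \sum_(i <- iota 1 k) row_wt F l i.
  transitivity (\sum_(a < n.+1) row_wt F l a).
    by rewrite /row_wt pair_bigA; apply: eq_bigr => x _; rewrite -pcoef_rv.
  rewrite -(big_mkord xpredT (row_wt F l)) big_ltn // row_wt_out // add0r.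
  rewrite (big_cat_nat (_ : 1 <= k.+1)%N) //=.
  rewrite [X in _ + X]big_nat_cond [X in _ + X]big1 ?addr0 => [|i /andP[i_range _]].
    by rewrite /index_iota subSS subn0.
  by apply: row_wt_out => //; lia.
rewrite /tab_wt /fflv_wt omega_rows root_rows -sumrB !natz_mem_uniq ?tab_of_uniq //.
rewrite !big_map -sumrB; apply: eq_big_seq => i; rewrite mem_iota => i_range.
by rewrite row_entry_wt //; lia.
Qed.

Lemma eq_tab_of {F G} : F =1 G -> tab_of F = tab_of G.
Proof.
move=> eqFG; apply: eq_map => i; rewrite /row_entry.
rewrite (eq_pick (_ : _ =1 [pred q : 'I_n.*2 | G (i, val q) != 0])) // => q.
by rewrite /= eqFG.
Qed.

End FundamentalWeight.

Theorem proposition3p8 (n k : nat) (hn : 1 <= n) (hk : 1 <= k <= n) :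
  exists f : {ffun rootidx n -> nat} -> seq nat,
    [/\ (forall p, in_S n (omega k) p -> is_sptab n k (f p)),
        (forall p1 p2, in_S n (omega k) p1 -> in_S n (omega k) p2 ->
           f p1 = f p2 -> p1 = p2),
        (forall T, is_sptab n k T -> exists p, in_S n (omega k) p /\ f p = T) &
        (forall p, in_S n (omega k) p -> forall l, 1 <= l <= n ->
           tab_wt n (f p) l = fflv_wt n (omega k) p l)].
Proof.
have le_kn : k <= n by case/andP: hk.
have in_S_anti := in_S_antichain_point n k le_kn.
exists (fun p => tab_of n k (pcoef n p)); split.
- by move=> p /in_S_anti; apply: tab_of_sptab.
- move=> p1 p2 /in_S_anti anti1 /in_S_anti anti2 eq_tab; apply: pcoef_inj => a.
  by rewrite -(point_of_tab_of n k le_kn anti1) -(point_of_tab_of n k le_kn anti2) eq_tab.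
- move=> T T_tab; have T_anti := tab_point_antichain n k le_kn T_tab.
  have pE : pcoef n [ffun x => tab_point k T (rv n x)] =1 tab_point k T.
    by case: T_anti => T_supp _ _; apply: pcoef_ffun => a /T_supp /andP[].
  exists [ffun x => tab_point k T (rv n x)]; split.
    by apply/in_S_anti; apply: eq_antichain_point T_anti => a; rewrite pE.
  by rewrite (eq_tab_of n k pE) tab_of_point.
- by move=> p /in_S_anti p_anti l l_range; apply: tab_of_wt.
Qed.
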